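(* (i) Let $I$ be a set and $R\colon I\times I\to[0,1]$ a fuzzy equivalence. Then $([0,1]^I,g_R)$ is a monadic Pavelka algebra, where $[0,1]^I$ is the power of the standard Pavelka algebra. (ii) Let $(\mathbf A,\exists)$ be a monadic Pavelka algebra with $\mathbf A$ semisimple. Then there exist a set $I$, a fuzzy equivalence $R$ on $I$, and an injective homomorphism of Pavelka algebras $e\colon A\to[0,1]^I$ such that $e(\exists(x))=g_R(e(x))$ for all $x\in A$.
   Context: An MV-algebra $(A;\oplus,\neg,0)$ carries derived operations $1=\neg0$, $x\cdot y=\neg(\neg x\oplus\neg y)$, $x\rightarrow y=\neg x\oplus y$, lattice order $x\le y$ iff $\neg x\oplus y=1$. The standard MV-algebra is $[0,1]$ with $x\oplus y=\min\{x+y,1\}$, $\neg x=1-x$. A Pavelka algebra is $\mathbf A=(A;\oplus,\neg,\{\mathbf r\mid r\in[0,1]\cap\mathbb Q\})$ with $(A;\oplus,\neg,\mathbf 0)$ an MV-algebra, $\mathbf r\oplus\mathbf s=\mathbf t$ whenever $\min\{r+s,1\}=t$, $\neg\mathbf r=\mathbf s$ whenever $1-r=s$. The standard Pavelka algebra is $[0,1]$ with $\mathbf r$ interpreted as $r$; $[0,1]^I$ is its power. $\mathbf A$ is semisimple if its MV-reduct is a subdirect product of simple MV-algebras. A monadic Pavelka algebra is $(\mathbf A,\exists)$ with $\exists$ a closure operator (monotone, $x\le\exists x$, $\exists\exists x=\exists x$) such that $\exists(\neg\exists(x))=\neg\exists(x)$ and $\mathbf r\cdot\exists(x)=\exists(\mathbf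 r\cdot x)$ for all $x$ and constants $\mathbf r$. A fuzzy equivalence on $I$ is $R\colon I\times I\to[0,1]$ with $R(i,i)=1$, $R(i,j)=R(j,i)$, $R(i,j)\cdot R(j,k)\le R(i,k)$. For such $R$, $g_R\colon[0,1]^I\to[0,1]^I$, $g_R(x)(i)=\bigvee_{j\in I}(R(i,j)\cdot x(j))$. *)

From Stdlib Require Import Reals Lra QArith Qreals ClassicalEpsilon.
Open Scope R_scope.

Section MV.
Context {A : Type} (oplus : A -> A -> A) (neg : A -> A) (zero : A).

Definition mv_one : A := neg zero.
Definition mv_prod (x y : A) : A := neg (oplus (neg x) (neg y)).
Definition mv_le (x y : A) : Prop := oplus (neg x) y = mv_one.

Record is_MV : Prop := {
  mv_assoc : forall x y z, oplus x (oplus y z) = oplus (oplus x y) z;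
  mv_comm  : forall x y, oplus x y = oplus y x;
  mv_zero  : forall x, oplus x zero = x;
  mv_negneg : forall x, neg (neg x) = x;
  mv_absorb : forall x, oplus x (neg zero) = neg zero;
  mv_luk : forall x y, oplus (neg (oplus (neg x) y)) y = oplus (neg (oplus (neg y) x)) x
}.

Definition mv_ideal (J : A -> Prop) : Prop :=
  J zero /\ (forall x y, J y -> mv_le x y -> J x) /\
  (forall x y, J x -> J y -> J (oplus x y)).

Definition mv_simple : Prop :=
  zero <> mv_one /\
  forall J, mv_ideal J -> (forall x, J x <-> x = zero) \/ (forall x, J x).
End MV.

Definition mv_hom {A B : Type} (oA : A -> A -> A) (nA : A -> A) (zA : A)
  (oB : B -> B -> B) (nB : B -> B) (zB : B) (h : A -> B) : Prop :=
  (forall x y, h (oA x y) = oB (h x) (h y)) /\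
  (forall x, h (nA x) = nB (h x)) /\ h zA = zB.

(** Semisimple: the MV-algebra is (isomorphic to) a subdirect product of
    simple MV-algebras, i.e. there is an injective homomorphism into a
    product of simple MV-algebras all of whose coordinate maps are onto. *)
Definition mv_semisimple {A : Type} (oplus : A -> A -> A) (neg : A -> A) (zero : A) : Prop :=
  exists (J : Type) (B : J -> Type)
         (oB : forall j, B j -> B j -> B j) (nB : forall j, B j -> B j)
         (zB : forall j, B j) (h : A -> forall j, B j),
    (forall j, is_MV (oB j) (nB j) (zB j) /\ mv_simple (oB j) (nB j) (zB j)) /\
    mv_hom oplus neg zero
      (fun f g j => oB j (f j) (g j)) (fun f j => nB j (f j)) (fun j => zB j) h /\
    (forall x y, h x = h y -> x = y) /\
    (forall j (b : B j), exists x, h x j = b).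

Definition unitQ := {q : Q | (0 <= q /\ q <= 1)%Q}.
Lemma qzero_prf : (0 <= 0 /\ 0 <= 1)%Q. Proof. split; discriminate. Qed.
Definition qzero : unitQ := exist _ 0%Q qzero_prf.
Definition qval (r : unitQ) : R := Q2R (proj1_sig r).

Definition is_pavelka {A : Type} (oplus : A -> A -> A) (neg : A -> A)
  (c : unitQ -> A) : Prop :=
  is_MV oplus neg (c qzero) /\
  (forall r s t : unitQ, qval t = Rmin (qval r + qval s) 1 -> oplus (c r) (c s) = c t) /\
  (forall r s : unitQ, qval s = 1 - qval r -> neg (c r) = c s).

Definition pavelka_hom {A B : Type} (oA : A -> A -> A) (nA : A -> A) (cA : unitQ -> A)
  (oB : B -> B -> B) (nB : B -> B) (cB : unitQ -> B) (h : A -> B) : Prop :=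
  (forall x y, h (oA x y) = oB (h x) (h y)) /\
  (forall x, h (nA x) = nB (h x)) /\ (forall r, h (cA r) = cB r).

Definition is_monadic_pavelka {A : Type} (oplus : A -> A -> A) (neg : A -> A)
  (c : unitQ -> A) (ex : A -> A) : Prop :=
  let z := c qzero in
  is_pavelka oplus neg c /\
  (forall x y, mv_le oplus neg z x y -> mv_le oplus neg z (ex x) (ex y)) /\
  (forall x, mv_le oplus neg z x (ex x)) /\
  (forall x, ex (ex x) = ex x) /\
  (forall x, ex (neg (ex x)) = neg (ex x)) /\
  (forall x (r : unitQ), mv_prod oplus neg (c r) (ex x) = ex (mv_prod oplus neg (c r) x)).

Definition unitR := {x : R | 0 <= x <= 1}.

Lemma u_oplus_prf (x y : unitR) : 0 <= Rmin (proj1_sig x + proj1_sig y) 1 <= 1.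
Proof. destruct x as [x Hx], y as [y Hy]; simpl.
  unfold Rmin; destruct Rle_dec; lra. Qed.
Definition u_oplus (x y : unitR) : unitR := exist _ _ (u_oplus_prf x y).

Lemma u_neg_prf (x : unitR) : 0 <= 1 - proj1_sig x <= 1.
Proof. destruct x as [x Hx]; simpl; lra. Qed.
Definition u_neg (x : unitR) : unitR := exist _ _ (u_neg_prf x).

Lemma u_const_prf (r : unitQ) : 0 <= qval r <= 1.
Proof. destruct r as [q [H0 H1]]; unfold qval; simpl.
  apply Qle_Rle in H0; apply Qle_Rle in H1.
  rewrite RMicromega.Q2R_0 in H0. rewrite RMicromega.Q2R_1 in H1. lra. Qed.
Definition u_const (r : unitQ) : unitR := exist _ _ (u_const_prf r).

(* Lukasiewicz product on [0,1] (the derived MV product x.y = max(0, x+y-1)) *)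
Definition u_prod (x y : unitR) : unitR := mv_prod u_oplus u_neg x y.

Definition pw_oplus {I : Type} (f g : I -> unitR) : I -> unitR := fun i => u_oplus (f i) (g i).
Definition pw_neg {I : Type} (f : I -> unitR) : I -> unitR := fun i => u_neg (f i).
Definition pw_const {I : Type} (r : unitQ) : I -> unitR := fun _ => u_const r.

Definition fuzzy_equiv {I : Type} (Rel : I -> I -> unitR) : Prop :=
  (forall i, proj1_sig (Rel i i) = 1) /\
  (forall i j, Rel i j = Rel j i) /\
  (forall i j k, proj1_sig (u_prod (Rel i j) (Rel j k)) <= proj1_sig (Rel i k)).

(** Supremum of a set of reals (its least upper bound when it exists). *)
Definition Rsup (E : R -> Prop) : R := epsilon (inhabits 0) (fun m => is_lub E m).

Definition gR_set {I : Type} (Rel : I -> I -> unitR) (x : I -> unitR) (i : I) : R -> Prop :=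
  fun v => exists j, v = proj1_sig (u_prod (Rel i j) (x j)).

Lemma gR_set_lub {I : Type} (Rel : I -> I -> unitR) (x : I -> unitR) (i : I) :
  exists m, is_lub (gR_set Rel x i) m.
Proof.
  destruct (completeness (gR_set Rel x i)) as [m Hm].
  - exists 1. intros v [j ->]. destruct (u_prod (Rel i j) (x j)) as [w Hw]; simpl; lra.
  - exists (proj1_sig (u_prod (Rel i i) (x i))). exists i. reflexivity.
  - exists m; exact Hm.
Qed.

Lemma gR_prf {I : Type} (Rel : I -> I -> unitR) (x : I -> unitR) (i : I) :
  0 <= Rsup (gR_set Rel x i) <= 1.
Proof.
  pose proof (epsilon_spec (inhabits 0) (fun m => is_lub (gR_set Rel x i) m)
                (gR_set_lub Rel x i)) as [Hub Hl].
  fold (Rsup (gR_set Rel x i)) in Hub, Hl.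
  split.
  - apply Rle_trans with (proj1_sig (u_prod (Rel i i) (x i))).
    + destruct (u_prod (Rel i i) (x i)) as [w Hw]; simpl; lra.
    + apply Hub. exists i; reflexivity.
  - apply Hl. intros v [j ->]. destruct (u_prod (Rel i j) (x j)) as [w Hw]; simpl; lra.
Qed.

Definition gR {I : Type} (Rel : I -> I -> unitR) (x : I -> unitR) : I -> unitR :=
  fun i => exist _ (Rsup (gR_set Rel x i)) (gR_prf Rel x i).

(* Part (i) is a computation with suprema: transitivity of R makes g_R
   idempotent, symmetry makes it fix the negations of its values, and
   r . sup = sup (r . _) because the Lukasiewicz product is monotone and
   continuous.

   For (ii): a simple MV-algebra is an archimedean chain, so in a simple
   Pavelka algebra b |-> sup {r | r <= b} is an injective homomorphism into
   [0,1]; hence in a semisimple A the homomorphisms A -> [0,1] separate points.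
   Take I to be the set of all of them, e(x)(p) = p(x) and
   R(p,q) = 1 - sup_y max(0, q(y) - p(ex y)).  The axioms of ex make R a fuzzy
   equivalence and give g_R(e x)(p) <= p(ex x).  The reverse inequality, when
   p(ex x) > 0, needs a q with q(y) - p(ex y) <= q(x) - p(ex x) for all y.  For
   finitely many y such a q exists because ex commutes with the constant
   multiples and preserves finite joins; an ultralimit of these finite
   witnesses handles all y at once. *)

From Stdlib Require Import Reals QArith Qreals ClassicalEpsilon.
From Stdlib Require Import Lra ZArith ProofIrrelevance FunctionalExtensionality Classical List.
From mathcomp Require filter.

Open Scope R_scope.

Notation val := (@proj1_sig R (fun x => 0 <= x <= 1)).

Ltac case_minmax := unfold Rmin, Rmax in *; repeat (destruct (Rle_dec _ _)); try lra.

Lemma valP (x : unitR) : 0 <= val x <= 1.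
Proof. exact (proj2_sig x). Qed.

Ltac unit_bounds := repeat match goal with
  | |- context [proj1_sig ?t] =>
      lazymatch goal with H : 0 <= proj1_sig t <= 1 |- _ => fail | _ => pose proof (valP t) end
  | H0 : context [proj1_sig ?t] |- _ =>
      lazymatch goal with H : 0 <= proj1_sig t <= 1 |- _ => fail | _ => pose proof (valP t) end
  end.

Lemma unitR_eq (x y : unitR) : val x = val y -> x = y.
Proof.
  destruct x as [x Hx], y as [y Hy]; simpl; intros ->.
  f_equal; apply proof_irrelevance.
Qed.

Lemma qval_bounds (r : unitQ) : 0 <= qval r <= 1.
Proof. exact (u_const_prf r). Qed.

Lemma qval_zero : qval qzero = 0.
Proof. apply RMicromega.Q2R_0. Qed.

Definition luk (a b : R) : R := Rmax 0 (a + b - 1).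

Lemma val_u_prod (a b : unitR) : val (u_prod a b) = luk (val a) (val b).
Proof. unfold u_prod, mv_prod, luk; simpl. case_minmax. Qed.

Lemma luk_le a b a' b' : a <= a' -> b <= b' -> luk a b <= luk a' b'.
Proof. unfold luk; intros; case_minmax. Qed.

Lemma luk_ge0 a b : 0 <= luk a b.
Proof. unfold luk; case_minmax. Qed.

Lemma luk_assoc a b c : 0 <= a <= 1 -> 0 <= b <= 1 -> 0 <= c <= 1 ->
  luk a (luk b c) = luk (luk a b) c.
Proof. unfold luk; intros; case_minmax. Qed.

Lemma luk_comm a b : luk a b = luk b a.
Proof. unfold luk; case_minmax. Qed.

Lemma luk_1l a : 0 <= a -> luk 1 a = a.
Proof. unfold luk; intros; case_minmax. Qed.

Lemma Rsup_is_lub (E : R -> Prop) m : is_lub E m -> is_lub E (Rsup E).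
Proof. intros H. exact (epsilon_spec (inhabits 0) (fun m => is_lub E m) (ex_intro _ m H)). Qed.

Lemma Rsup_lub (E : R -> Prop) :
  (exists x, E x) -> (exists b, forall x, E x -> x <= b) -> is_lub E (Rsup E).
Proof.
  intros [x Ex] [b Hb].
  destruct (completeness E) as [m Hm]; [exists b; intros y Hy; auto | exists x; auto |].
  exact (Rsup_is_lub E m Hm).
Qed.

(** * The monadic algebra ([0,1]^I, g_R) *)

Lemma pw_le_iff {I : Type} (x y : I -> unitR) :
  mv_le (@pw_oplus I) (@pw_neg I) (pw_const qzero) x y <-> forall i, val (x i) <= val (y i).
Proof.
  unfold mv_le, mv_one. split.
  - intros H i. apply (f_equal (fun f => val (f i))) in H. simpl in H.
    rewrite qval_zero in H. unit_bounds. case_minmax.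
  - intros H. apply functional_extensionality; intro i. apply unitR_eq. simpl.
    rewrite qval_zero. specialize (H i). unit_bounds. case_minmax.
Qed.

Lemma pw_pavelka (I : Type) : is_pavelka (@pw_oplus I) (@pw_neg I) (@pw_const I).
Proof.
  split; [|split].
  - constructor; intros; apply functional_extensionality; intro i; apply unitR_eq;
      simpl; try rewrite qval_zero; unit_bounds; case_minmax.
  - intros r s t Ht. apply functional_extensionality; intro i; apply unitR_eq; simpl.
    now rewrite Ht.
  - intros r s Hs. apply functional_extensionality; intro i; apply unitR_eq; simpl. lra.
Qed.

Section Closure.
Context {I : Type} (Rel : I -> I -> unitR).

Lemma gR_is_lub (x : I -> unitR) i : is_lub (gR_set Rel x i) (val (gR Rel x i)).
Proof. destruct (gR_set_lub Rel x i) as [m Hm]. exact (Rsup_is_lub _ m Hm). Qed.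

Lemma gR_ge (x : I -> unitR) i j : luk (val (Rel i j)) (val (x j)) <= val (gR Rel x i).
Proof. apply (gR_is_lub x i). exists j. symmetry; apply val_u_prod. Qed.

Lemma gR_le (x : I -> unitR) i T :
  (forall j, luk (val (Rel i j)) (val (x j)) <= T) -> val (gR Rel x i) <= T.
Proof.
  intros H. apply (gR_is_lub x i). intros v [j ->]. rewrite val_u_prod. apply H.
Qed.

(* r . sup_j a_j <= T follows from r . a_j <= T for all j, as t |-> luk r t
   is monotone and continuous. *)
Lemma luk_gR_le (x : I -> unitR) i r T : 0 <= r <= 1 -> 0 <= T ->
  (forall j, luk r (luk (val (Rel i j)) (val (x j))) <= T) ->
  luk r (val (gR Rel x i)) <= T.
Proof.
  intros Hr HT H.
  destruct (Rle_dec (r + val (gR Rel x i) - 1) 0); [unfold luk; case_minmax|].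
  assert (Hs : val (gR Rel x i) <= T + 1 - r).
  { apply gR_le. intros j. specialize (H j).
    pose proof (luk_ge0 (val (Rel i j)) (val (x j))). unfold luk in *; case_minmax. }
  unfold luk; case_minmax.
Qed.

Lemma gR_monotone (x y : I -> unitR) :
  (forall i, val (x i) <= val (y i)) -> forall i, val (gR Rel x i) <= val (gR Rel y i).
Proof.
  intros Hxy i. apply gR_le. intro j.
  eapply Rle_trans; [|apply (gR_ge y i j)]. apply luk_le; [lra | apply Hxy].
Qed.

Lemma gR_luk_const (x : I -> unitR) (r : unitQ) i :
  luk (qval r) (val (gR Rel x i)) = val (gR Rel (fun j => u_prod (u_const r) (x j)) i).
Proof.
  pose proof (qval_bounds r).
  apply Rle_antisym.
  - apply luk_gR_le; [lra | apply valP |]. intro j.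
    eapply Rle_trans; [|apply (gR_ge _ i j)]. cbv beta. rewrite val_u_prod. simpl.
    rewrite !luk_assoc by (apply valP || apply qval_bounds).
    rewrite (luk_comm (qval r)). lra.
  - apply gR_le. intro j. cbv beta. rewrite val_u_prod. simpl.
    rewrite luk_assoc, (luk_comm (val (Rel i j))), <- luk_assoc
      by (apply valP || apply qval_bounds).
    apply luk_le; [lra | apply gR_ge].
Qed.

Hypothesis HR : fuzzy_equiv Rel.

Lemma gR_extensive (x : I -> unitR) i : val (x i) <= val (gR Rel x i).
Proof.
  destruct HR as [Hrefl _]. pose proof (gR_ge x i i) as H.
  rewrite Hrefl, luk_1l in H by apply valP. exact H.
Qed.

Lemma gR_luk_rel (x : I -> unitR) i j :
  luk (val (Rel i j)) (val (gR Rel x j)) <= val (gR Rel x i).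
Proof.
  destruct HR as [_ [_ Htr]].
  apply luk_gR_le; [apply valP | apply (Rle_trans _ (val (x i))); [apply valP | apply gR_extensive] |].
  intros k. rewrite luk_assoc by apply valP.
  eapply Rle_trans; [|apply (gR_ge x i k)].
  apply luk_le; [|lra]. rewrite <- val_u_prod. apply Htr.
Qed.

Lemma gR_idempotent (x : I -> unitR) : gR Rel (gR Rel x) = gR Rel x.
Proof.
  apply functional_extensionality; intro i; apply unitR_eq. apply Rle_antisym.
  - apply gR_le. intro j. apply gR_luk_rel.
  - apply gR_extensive.
Qed.

Lemma gR_fixes_neg_gR (x : I -> unitR) : gR Rel (pw_neg (gR Rel x)) = pw_neg (gR Rel x).
Proof.
  apply functional_extensionality; intro i; apply unitR_eq. apply Rle_antisym.
  - apply gR_le. intro j.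
    change (luk (val (Rel i j)) (1 - val (gR Rel x j)) <= 1 - val (gR Rel x i)).
    destruct HR as [_ [Hsym _]].
    pose proof (gR_luk_rel x j i) as H. rewrite Hsym in H.
    unit_bounds. unfold luk in *; case_minmax.
  - apply gR_extensive.
Qed.

End Closure.

Theorem gR_monadic_pavelka (I : Type) (Rel : I -> I -> unitR) :
  fuzzy_equiv Rel -> is_monadic_pavelka (@pw_oplus I) (@pw_neg I) (@pw_const I) (gR Rel).
Proof.
  intros HR. split; [apply pw_pavelka | split; [|split; [|split; [|split]]]].
  - intros x y Hxy. apply pw_le_iff. apply gR_monotone. now apply pw_le_iff.
  - intros x. apply pw_le_iff. intro i. now apply gR_extensive.
  - intros x. now apply gR_idempotent.
  - intros x. now apply gR_fixes_neg_gR.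
  - intros x r. apply functional_extensionality; intro i; apply unitR_eq.
    change (val (u_prod (u_const r) (gR Rel x i))
            = val (gR Rel (fun j => u_prod (u_const r) (x j)) i)).
    rewrite <- gR_luk_const. apply val_u_prod.
Qed.

Definition isQ (x : R) : Prop := exists q : Q, Q2R q = x.

Lemma isQ_qval r : isQ (qval r).
Proof. now exists (proj1_sig r). Qed.
Lemma isQ_1 : isQ 1.
Proof. exists 1%Q. apply RMicromega.Q2R_1. Qed.
Lemma isQ_plus x y : isQ x -> isQ y -> isQ (x + y).
Proof. intros [a <-] [b <-]. exists (a + b)%Q. apply Q2R_plus. Qed.
Lemma isQ_minus x y : isQ x -> isQ y -> isQ (x - y).
Proof. intros [a <-] [b <-]. exists (a - b)%Q. apply Q2R_minus. Qed.
Lemma isQ_mult x y : isQ x -> isQ y -> isQ (x * y).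
Proof. intros [a <-] [b <-]. exists (a * b)%Q. apply Q2R_mult. Qed.
Lemma isQ_INR m : isQ (INR m).
Proof.
  induction m as [|m IH]; [exists 0%Q; apply RMicromega.Q2R_0|].
  rewrite S_INR. apply isQ_plus; [exact IH | apply isQ_1].
Qed.
Lemma isQ_min x y : isQ x -> isQ y -> isQ (Rmin x y).
Proof. intros. unfold Rmin. destruct (Rle_dec x y); auto. Qed.
Lemma isQ_1_minus_qval r : isQ (1 - qval r).
Proof. apply isQ_minus; [apply isQ_1 | apply isQ_qval]. Qed.

Lemma unitQ_of x : 0 <= x <= 1 -> isQ x -> exists r : unitQ, qval r = x.
Proof.
  intros Hx [q Hq].
  assert (H : (0 <= q /\ q <= 1)%Q).
  { split; apply Rle_Qle; rewrite Hq;
      [rewrite RMicromega.Q2R_0 | rewrite RMicromega.Q2R_1]; lra. }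
  exists (exist _ q H). exact Hq.
Qed.

Lemma unitQ_1_minus r : exists s : unitQ, qval s = 1 - qval r.
Proof.
  pose proof (qval_bounds r). apply unitQ_of; [lra | apply isQ_1_minus_qval].
Qed.

Lemma unitQ_oplus r s : exists t : unitQ, qval t = Rmin (qval r + qval s) 1.
Proof.
  pose proof (qval_bounds r); pose proof (qval_bounds s).
  apply unitQ_of; [case_minmax | apply isQ_min; [apply isQ_plus; apply isQ_qval | apply isQ_1]].
Qed.

(* With n := up (1 / (b - a)) and m := up (a n), the rational m / n lies in (a, b). *)
Lemma Q_dense_R a b : a < b -> exists q : Q, a < Q2R q < b.
Proof.
  intros Hab.
  set (d := b - a).
  assert (Hd : 0 < d) by (unfold d; lra).
  destruct (archimed (/ d)) as [Hn1 Hn2].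
  set (n := up (/ d)) in *.
  assert (Hn : 0 < IZR n) by (pose proof (Rinv_0_lt_compat d Hd); lra).
  assert (Hnz : (0 < n)%Z) by (apply lt_0_IZR; exact Hn).
  destruct (archimed (a * IZR n)) as [Hm1 Hm2].
  set (m := up (a * IZR n)) in *.
  exists (Qmake m (Z.to_pos n)).
  unfold Q2R; simpl. rewrite Z2Pos.id by exact Hnz.
  assert (Hdn : 1 < d * IZR n).
  { replace 1 with (d * / d) by (field; lra). apply Rmult_lt_compat_l; auto. }
  assert (Ht : / IZR n * IZR n = 1) by (apply Rinv_l; lra).
  assert (Ht0 : 0 < / IZR n) by (apply Rinv_0_lt_compat; lra).
  set (t := / IZR n) in *.
  assert (Hant : a * IZR n * t = a) by (rewrite Rmult_assoc, (Rmult_comm (IZR n) t), Ht; ring).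
  assert (Htd : t < d).
  { assert (t * 1 < t * (d * IZR n)) by (apply Rmult_lt_compat_l; auto).
    replace (t * (d * IZR n)) with (d * (t * IZR n)) in H by ring. rewrite Ht in H. lra. }
  assert (H1 : a * IZR n * t < IZR m * t) by (apply Rmult_lt_compat_r; auto).
  assert (H2 : IZR m * t <= (a * IZR n + 1) * t) by (apply Rmult_le_compat_r; lra).
  replace ((a * IZR n + 1) * t) with (a * IZR n * t + t) in H2 by ring.
  unfold d in *. split; lra.
Qed.

Lemma unitQ_between a b : a < b -> a < 1 -> 0 < b -> exists r : unitQ, a < qval r < b.
Proof.
  intros H1 H2 H3.
  destruct (Q_dense_R (Rmax a 0) (Rmin b 1)) as [q Hq]; [case_minmax|].
  destruct (unitQ_of (Q2R q)) as [r Hr]; [case_minmax | now exists q |].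
  exists r. rewrite Hr. case_minmax.
Qed.

Section MVAlgebra.
Context {B : Type} (o : B -> B -> B) (n : B -> B) (z : B) (HB : is_MV o n z).

Notation le := (mv_le o n z).

Lemma mv_oplusA x y w : o x (o y w) = o (o x y) w.
Proof. apply (mv_assoc _ _ _ HB). Qed.
Lemma mv_oplusC x y : o x y = o y x.
Proof. apply (mv_comm _ _ _ HB). Qed.
Lemma mv_oplus0 x : o x z = x.
Proof. apply (mv_zero _ _ _ HB). Qed.
Lemma mv_0oplus x : o z x = x.
Proof. rewrite mv_oplusC. apply mv_oplus0. Qed.
Lemma mv_negK x : n (n x) = x.
Proof. apply (mv_negneg _ _ _ HB). Qed.
Lemma mv_oplus1 x : o x (n z) = n z.
Proof. apply (mv_absorb _ _ _ HB). Qed.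
Lemma mv_1oplus x : o (n z) x = n z.
Proof. rewrite mv_oplusC. apply mv_oplus1. Qed.

Lemma mv_oplusNx x : o (n x) x = n z.
Proof.
  pose proof (mv_luk _ _ _ HB x (n z)) as H.
  rewrite mv_oplus1, !mv_negK, !mv_0oplus in H. symmetry; exact H.
Qed.

Lemma mv_le_iff_exists x y : le x y <-> exists t, y = o x t.
Proof.
  unfold mv_le, mv_one. split.
  - intros H. exists (n (o (n y) x)).
    pose proof (mv_luk _ _ _ HB x y) as L. rewrite H, mv_negK, mv_0oplus in L.
    etransitivity; [exact L | apply mv_oplusC].
  - intros [t ->]. rewrite mv_oplusA, mv_oplusNx. apply mv_1oplus.
Qed.

Lemma mv_le_refl x : le x x.
Proof. apply mv_oplusNx. Qed.

Lemma mv_le_trans x y w : le x y -> le y w -> le x w.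
Proof.
  rewrite !mv_le_iff_exists. intros [t ->] [s ->]. exists (o t s). symmetry; apply mv_oplusA.
Qed.

Lemma mv_le_antisym x y : le x y -> le y x -> x = y.
Proof.
  unfold mv_le, mv_one. intros H1 H2.
  pose proof (mv_luk _ _ _ HB x y) as L. rewrite H1, H2, !mv_negK, !mv_0oplus in L.
  symmetry; exact L.
Qed.

Lemma mv_le_oplus x y x' y' : le x y -> le x' y' -> le (o x x') (o y y').
Proof.
  rewrite !mv_le_iff_exists. intros [t ->] [s ->]. exists (o t s).
  rewrite <- !mv_oplusA. f_equal. rewrite !mv_oplusA. f_equal. apply mv_oplusC.
Qed.

Lemma mv_le0x x : le z x.
Proof. apply mv_1oplus. Qed.

Lemma mv_lex1 x : le x (n z).
Proof. apply mv_oplus1. Qed.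

Lemma mv_le_neg x y : le x y -> le (n y) (n x).
Proof. unfold mv_le, mv_one. intros H. rewrite mv_negK, mv_oplusC. exact H. Qed.

Lemma mv_oplus_prod_absorb p q : o (o p q) (n (o (n p) (n q))) = o p q.
Proof.
  set (D := n (o (n p) (n q))).
  assert (E1 : o (n q) D = o (n (o p q)) p).
  { unfold D. rewrite mv_oplusC. pose proof (mv_luk _ _ _ HB p (n q)) as L.
    rewrite mv_negK in L. rewrite L, (mv_oplusC q p). reflexivity. }
  assert (E2 : o p q = o p (n (o (n q) D))).
  { rewrite E1. symmetry. rewrite (mv_oplusC p), (mv_luk _ _ _ HB (o p q) p).
    rewrite (mv_oplusA (n p) p q), mv_oplusNx, mv_1oplus, mv_negK, mv_0oplus. reflexivity. }
  assert (E3 : o (n (o (n q) D)) D = q).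
  { rewrite (mv_luk _ _ _ HB q D). unfold D at 1.
    rewrite mv_negK, <- mv_oplusA, mv_oplusNx, mv_oplus1, mv_negK, mv_0oplus. reflexivity. }
  rewrite E2 at 1. rewrite <- mv_oplusA, E3. reflexivity.
Qed.

Fixpoint mv_nmul (m : nat) (w : B) : B :=
  match m with O => z | S m' => o w (mv_nmul m' w) end.

Lemma mv_nmulD a b w : o (mv_nmul a w) (mv_nmul b w) = mv_nmul (a + b) w.
Proof.
  induction a as [|a IH]; simpl; [apply mv_0oplus | now rewrite <- mv_oplusA, IH].
Qed.

Section Simple.
Hypothesis Hs : mv_simple o n z.

(* The ideal generated by w is all of B unless w = 0. *)
Lemma simple_mv_archimedean w : w <> z -> exists m, mv_nmul m w = n z.
Proof.
  intros Hw. destruct Hs as [_ Hid].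
  set (J := fun y => exists m, le y (mv_nmul m w)).
  assert (HJ : mv_ideal o n z J).
  { split; [|split].
    - exists 0%nat. apply mv_le0x.
    - intros x y [m Hm] Hxy. exists m. eapply mv_le_trans; eauto.
    - intros x y [a Ha] [b Hb]. exists (a + b)%nat. rewrite <- mv_nmulD.
      apply mv_le_oplus; auto. }
  destruct (Hid J HJ) as [H | H].
  - exfalso. apply Hw, H. exists 1%nat. simpl. rewrite mv_oplus0. apply mv_le_refl.
  - destruct (H (n z)) as [m Hm]. exists m. unfold mv_le, mv_one in Hm.
    rewrite mv_negK, mv_0oplus in Hm. exact Hm.
Qed.

(* u := (a -> b)^c and w := (b -> a)^c satisfy u^c + w = u^c; if w <> 0 then
   some m w = 1 and u = 0. *)
Lemma simple_mv_total a b : le a b \/ le b a.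
Proof.
  set (u := n (o (n a) b)). set (w := n (o (n b) a)).
  assert (Hk : o (n u) w = n u).
  { unfold u, w. rewrite mv_negK. pose proof (mv_oplus_prod_absorb (n a) b) as G.
    rewrite mv_negK in G. rewrite (mv_oplusC (n b) a). exact G. }
  assert (Hk' : forall m, o (n u) (mv_nmul m w) = n u).
  { induction m as [|m IH]; simpl; [apply mv_oplus0 | now rewrite mv_oplusA, Hk]. }
  destruct (classic (w = z)) as [Hw | Hw].
  - right. unfold mv_le, mv_one. unfold w in Hw. now rewrite <- Hw, mv_negK.
  - left. destruct (simple_mv_archimedean w Hw) as [m Hm]. specialize (Hk' m).
    rewrite Hm, mv_oplus1 in Hk'. unfold mv_le, mv_one. unfold u in Hk'.
    rewrite mv_negK in Hk'. symmetry; exact Hk'.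
Qed.

End Simple.
End MVAlgebra.

(** * Simple Pavelka algebras embed into [0,1] *)

Section SimpleEmbedding.
Context {B : Type} (o : B -> B -> B) (n : B -> B) (k : unitQ -> B)
  (HB : is_MV o n (k qzero)) (Hs : mv_simple o n (k qzero))
  (Hkadd : forall r s t, qval t = Rmin (qval r + qval s) 1 -> o (k r) (k s) = k t)
  (Hkneg : forall r s, qval s = 1 - qval r -> n (k r) = k s).

Notation z := (k qzero).
Notation le := (mv_le o n z).

Lemma const_one r : qval r = 1 -> k r = n z.
Proof. intros H. symmetry. apply Hkneg. rewrite qval_zero; lra. Qed.

(* If a positive constant d were 0, so would be every min(m d, 1), hence 1 = 0. *)
Lemma const_pos_neq0 d : 0 < qval d -> k d <> z.
Proof.
  intros Hd Hkd. destruct Hs as [Hnt _].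
  assert (Hm : forall m, exists r, qval r = Rmin (INR m * qval d) 1 /\ k r = z).
  { induction m as [|m [r [Hr1 Hr2]]].
    - exists qzero. rewrite qval_zero. simpl. split; auto. case_minmax.
    - pose proof (qval_bounds d). pose proof (pos_INR m).
      destruct (unitQ_of (Rmin (INR (S m) * qval d) 1)) as [r' Hr'].
      { rewrite S_INR. split; case_minmax. nra. }
      { apply isQ_min; [apply isQ_mult; [apply isQ_INR | apply isQ_qval] | apply isQ_1]. }
      exists r'. split; auto. rewrite <- (Hkadd d r r').
      + rewrite Hkd, Hr2. apply (mv_oplus0 _ _ _ HB).
      + rewrite Hr', Hr1, S_INR. case_minmax. }
  destruct (archimed (/ qval d)) as [Ha _].
  set (N := up (/ qval d)) in *.
  assert (HN : (0 <= N)%Z) by (apply le_IZR; pose proof (Rinv_0_lt_compat _ Hd); lra).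
  destruct (Hm (Z.to_nat N)) as [r [Hr1 Hr2]].
  rewrite INR_IZR_INZ, Z2Nat.id in Hr1 by exact HN.
  assert (IZR N * qval d >= 1).
  { assert (/ qval d * qval d = 1) by (apply Rinv_l; lra). nra. }
  apply Hnt. unfold mv_one. rewrite <- (const_one r) by (rewrite Hr1; case_minmax).
  symmetry; exact Hr2.
Qed.

Lemma const_le_qval r s : le (k r) (k s) -> qval r <= qval s.
Proof.
  intros H. apply Rnot_lt_le. intro Hlt.
  pose proof (qval_bounds r); pose proof (qval_bounds s).
  destruct (unitQ_1_minus r) as [rn Hrn].
  destruct (unitQ_of (1 - qval r + qval s)) as [t Ht];
    [lra | apply isQ_plus; [apply isQ_1_minus_qval | apply isQ_qval] |].
  destruct (unitQ_1_minus t) as [tn Htn].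
  unfold mv_le, mv_one in H.
  rewrite (Hkneg r rn), (Hkadd rn s t) in H by (try rewrite Ht, Hrn; case_minmax).
  apply (const_pos_neq0 tn); [lra |].
  rewrite <- (Hkneg t tn), H by lra. apply (mv_negK _ _ _ HB).
Qed.

Definition cut (b : B) : R := Rsup (fun x => exists r, x = qval r /\ le (k r) b).

Lemma cut_is_lub b : is_lub (fun x => exists r, x = qval r /\ le (k r) b) (cut b).
Proof.
  apply Rsup_lub.
  - exists 0, qzero. rewrite qval_zero. split; auto. apply (mv_le0x _ _ _ HB).
  - exists 1. intros x [r [-> _]]. apply qval_bounds.
Qed.

Lemma cut_ge r b : le (k r) b -> qval r <= cut b.
Proof. intros H. apply cut_is_lub. exists r; auto. Qed.

Lemma cut_le r b : le b (k r) -> cut b <= qval r.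
Proof.
  intros H. apply cut_is_lub. intros x [r' [-> Hr']].
  apply const_le_qval. eapply (mv_le_trans _ _ _ HB); eauto.
Qed.

Lemma cut_bounds b : 0 <= cut b <= 1.
Proof.
  split.
  - rewrite <- qval_zero. apply cut_ge, (mv_le0x _ _ _ HB).
  - apply cut_is_lub. intros x [r [-> _]]. apply qval_bounds.
Qed.

Lemma cut_const r : cut (k r) = qval r.
Proof. apply Rle_antisym; [apply cut_le | apply cut_ge]; apply (mv_le_refl _ _ _ HB). Qed.

(* B is a chain, so b sits between the constants below and above cut b. *)
Lemma cut_approx_below b eps : 0 < eps -> exists r, cut b - eps < qval r <= cut b /\ le (k r) b.
Proof.
  intros He. pose proof (cut_bounds b).
  destruct (Rlt_dec (cut b - eps) 0) as [Hlt|Hge].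
  - exists qzero. rewrite qval_zero. repeat split; try lra. apply (mv_le0x _ _ _ HB).
  - destruct (unitQ_between (cut b - eps) (cut b)) as [r Hr]; try lra.
    exists r. repeat split; try lra.
    destruct (simple_mv_total o n z HB Hs (k r) b) as [|Hbr]; auto.
    apply cut_le in Hbr. lra.
Qed.

Lemma cut_approx_above b eps : 0 < eps -> exists r, cut b <= qval r < cut b + eps /\ le b (k r).
Proof.
  intros He. pose proof (cut_bounds b).
  destruct (Rlt_dec 1 (cut b + eps)) as [Hgt|Hle].
  - destruct (unitQ_of 1) as [r Hr]; [lra | apply isQ_1 |].
    exists r. rewrite Hr, (const_one r Hr). split; [lra | apply (mv_lex1 _ _ _ HB)].
  - destruct (unitQ_between (cut b) (cut b + eps)) as [r Hr]; try lra.
    exists r. repeat split; try lra.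
    destruct (simple_mv_total o n z HB Hs (k r) b) as [Hrb|]; auto.
    apply cut_ge in Hrb. lra.
Qed.

Lemma cut_neg b : cut (n b) = 1 - cut b.
Proof.
  apply Rle_antisym; apply Rle_plus_epsilon; intros eps He.
  - destruct (cut_approx_below b eps He) as [r [Hr Hle]].
    destruct (unitQ_1_minus r) as [r' Hr'].
    assert (H : le (n b) (k r')) by (rewrite <- (Hkneg r r') by lra; now apply (mv_le_neg _ _ _ HB)).
    apply cut_le in H. lra.
  - destruct (cut_approx_above b eps He) as [r [Hr Hle]].
    destruct (unitQ_1_minus r) as [r' Hr'].
    assert (H : le (k r') (n b)) by (rewrite <- (Hkneg r r') by lra; now apply (mv_le_neg _ _ _ HB)).
    apply cut_ge in H. lra.
Qed.

Lemma cut_oplus b b' : cut (o b b') = Rmin (cut b + cut b') 1.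
Proof.
  pose proof (cut_bounds b); pose proof (cut_bounds b').
  apply Rle_antisym; apply Rle_plus_epsilon; intros eps He.
  - destruct (cut_approx_above b (eps/2)) as [r [Hr Hle]]; [lra|].
    destruct (cut_approx_above b' (eps/2)) as [r' [Hr' Hle']]; [lra|].
    pose proof (qval_bounds r); pose proof (qval_bounds r').
    destruct (unitQ_oplus r r') as [t Ht].
    assert (Hle2 : le (o b b') (k t)) by (rewrite <- (Hkadd r r' t) by auto; now apply (mv_le_oplus _ _ _ HB)).
    apply cut_le in Hle2. rewrite Ht in Hle2. case_minmax.
  - destruct (cut_approx_below b (eps/2)) as [r [Hr Hle]]; [lra|].
    destruct (cut_approx_below b' (eps/2)) as [r' [Hr' Hle']]; [lra|].
    pose proof (qval_bounds r); pose proof (qval_bounds r').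
    destruct (unitQ_oplus r r') as [t Ht].
    assert (Hle2 : le (k t) (o b b')) by (rewrite <- (Hkadd r r' t) by auto; now apply (mv_le_oplus _ _ _ HB)).
    apply cut_ge in Hle2. rewrite Ht in Hle2. case_minmax.
Qed.

(* If cut x = cut y then d := (x -> y)^c has cut 0, so all m d have cut 0 and
   d = 0 by simplicity, i.e. x <= y. *)
Lemma cut_le_inv x y : cut x = cut y -> le x y.
Proof.
  intros Hxy. set (d := n (o (n x) y)).
  assert (Hd : cut d = 0).
  { unfold d. rewrite cut_neg, cut_oplus, cut_neg, Hxy. pose proof (cut_bounds y). case_minmax. }
  destruct (classic (d = z)) as [Hz | Hnz].
  - unfold mv_le, mv_one. unfold d in Hz. now rewrite <- Hz, (mv_negK _ _ _ HB).
  - exfalso. destruct (simple_mv_archimedean o n z HB Hs d Hnz) as [m Hm].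
    assert (Hmul : forall m, cut (mv_nmul o z m d) = 0).
    { induction m0 as [|m0 IH]; simpl.
      - rewrite cut_const. apply qval_zero.
      - rewrite cut_oplus, Hd, IH. case_minmax. }
    specialize (Hmul m). rewrite Hm, cut_neg, cut_const, qval_zero in Hmul. lra.
Qed.

Lemma cut_inj b b' : cut b = cut b' -> b = b'.
Proof. intros H. apply (mv_le_antisym o n z HB); apply cut_le_inv; auto. Qed.

End SimpleEmbedding.

Section Homs.
Context {A : Type} (oplus : A -> A -> A) (neg : A -> A) (c : unitQ -> A).

Definition phom (f : A -> unitR) : Prop := pavelka_hom oplus neg c u_oplus u_neg u_const f.

Definition mv_meet (p q : A) : A := mv_prod oplus neg p (oplus (neg p) q).
Definition mv_join (p q : A) : A := neg (mv_meet (neg p) (neg q)).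

Section Hom.
Context (f : A -> unitR) (Hf : phom f).

Lemma phom_oplus x y : val (f (oplus x y)) = Rmin (val (f x) + val (f y)) 1.
Proof. now rewrite (proj1 Hf). Qed.
Lemma phom_neg x : val (f (neg x)) = 1 - val (f x).
Proof. now rewrite (proj1 (proj2 Hf)). Qed.
Lemma phom_const r : val (f (c r)) = qval r.
Proof. now rewrite (proj2 (proj2 Hf)). Qed.
Lemma phom_one : val (f (mv_one neg (c qzero))) = 1.
Proof. unfold mv_one. rewrite phom_neg, phom_const, qval_zero. lra. Qed.

Lemma phom_le x y : mv_le oplus neg (c qzero) x y -> val (f x) <= val (f y).
Proof.
  unfold mv_le. intros H. apply (f_equal (fun a => val (f a))) in H.
  rewrite phom_oplus, phom_neg, phom_one in H. unit_bounds. case_minmax.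
Qed.

Lemma phom_prod x y : val (f (mv_prod oplus neg x y)) = luk (val (f x)) (val (f y)).
Proof. unfold mv_prod, luk. rewrite phom_neg, phom_oplus, !phom_neg. unit_bounds. case_minmax. Qed.

Lemma phom_meet p q : val (f (mv_meet p q)) = Rmin (val (f p)) (val (f q)).
Proof. unfold mv_meet. rewrite phom_prod, phom_oplus, phom_neg. unfold luk. unit_bounds. case_minmax. Qed.

Lemma phom_join p q : val (f (mv_join p q)) = Rmax (val (f p)) (val (f q)).
Proof. unfold mv_join. rewrite phom_neg, phom_meet, !phom_neg. unit_bounds. case_minmax. Qed.

End Hom.
End Homs.

Lemma simple_pavelka_embedding {B : Type} (o : B -> B -> B) (n : B -> B) (k : unitQ -> B) :
  is_MV o n (k qzero) -> mv_simple o n (k qzero) ->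
  (forall r s t, qval t = Rmin (qval r + qval s) 1 -> o (k r) (k s) = k t) ->
  (forall r s, qval s = 1 - qval r -> n (k r) = k s) ->
  exists e : B -> unitR, phom o n k e /\ forall b b', e b = e b' -> b = b'.
Proof.
  intros HB Hs Hkadd Hkneg.
  exists (fun b => exist _ (cut o n k b) (cut_bounds o n k HB b)).
  split; [split; [|split] |].
  - intros x y. apply unitR_eq. apply cut_oplus; auto.
  - intros x. apply unitR_eq. apply cut_neg; auto.
  - intros r. apply unitR_eq. apply cut_const; auto.
  - intros b b' H. apply (cut_inj o n k HB Hs Hkadd Hkneg). exact (f_equal val H).
Qed.

Lemma semisimple_phoms_separate {A : Type} (oplus : A -> A -> A) (neg : A -> A) (c : unitQ -> A) :
  is_pavelka oplus neg c -> mv_semisimple oplus neg (c qzero) ->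
  forall a b, (forall f, phom oplus neg c f -> f a = f b) -> a = b.
Proof.
  intros [_ [Hcadd Hcneg]] [J [Bj [oB [nB [zB [h [HBs [[Hho [Hhn Hhz]] [Hinj _]]]]]]]]] a b Hab.
  apply Hinj, functional_extensionality_dep. intro j.
  set (hj := fun y => h y j).
  assert (Hoj : forall x y, hj (oplus x y) = oB j (hj x) (hj y)) by (intros; unfold hj; now rewrite Hho).
  assert (Hnj : forall x, hj (neg x) = nB j (hj x)) by (intros; unfold hj; now rewrite Hhn).
  destruct (HBs j) as [HBj Hsj].
  assert (Hz : hj (c qzero) = zB j) by (unfold hj; now rewrite Hhz).
  rewrite <- Hz in HBj, Hsj.
  destruct (simple_pavelka_embedding (oB j) (nB j) (fun r => hj (c r)) HBj Hsj)
    as [e [[Heo [Hen Hec]] Heinj]].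
  - intros r s t Ht. rewrite <- Hoj. f_equal. now apply Hcadd.
  - intros r s Hs. rewrite <- Hnj. f_equal. now apply Hcneg.
  - apply Heinj. apply (Hab (fun y => e (hj y))). split; [|split].
    + intros x y. now rewrite Hoj, Heo.
    + intros x. now rewrite Hnj, Hen.
    + intros r. apply Hec.
Qed.

(** * Ultrafilters and ultralimits *)

Record ultrafilter {T : Type} (U : (T -> Prop) -> Prop) : Prop := {
  uf_true : U (fun _ => True);
  uf_and : forall P Q, U P -> U Q -> U (fun t => P t /\ Q t);
  uf_mono : forall P Q : T -> Prop, (forall t, P t -> Q t) -> U P -> U Q;
  uf_inhabited : forall P, U P -> exists t, P t;
  uf_or_not : forall P, U P \/ U (fun t => ~ P t)
}.

Lemma ultrafilter_extension {T : Type} (F : (T -> Prop) -> Prop) :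
  F (fun _ => True) ->
  (forall P Q, F P -> F Q -> F (fun t => P t /\ Q t)) ->
  (forall P Q : T -> Prop, (forall t, P t -> Q t) -> F P -> F Q) ->
  (forall P, F P -> exists t, P t) ->
  exists U, ultrafilter U /\ forall P, F P -> U P.
Proof.
  intros FT FI FS Fex.
  assert (FF : filter.ProperFilter F).
  { apply filter.Build_ProperFilter_ex; [exact Fex |].
    constructor; [exact FT | intros P Q; apply FI | intros P Q; apply FS]. }
  destruct (filter.ultraFilterLemma FF) as [U [HU FU]].
  pose proof (filter.filter_filter (ProperFilter := @filter.ultra_proper _ _ HU)) as HUf.
  exists U. split; [constructor | exact FU].
  - exact (filter.filterT (Filter := HUf)).
  - intros P Q. exact (@filter.filterI _ _ HUf P Q).
  - intros P Q. exact (@filter.filterS _ _ HUf P Q).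
  - intros P. exact (filter.filter_ex (FF := @filter.ultra_proper _ _ HU)).
  - intros P. exact (filter.in_ultra_setVsetC P HU).
Qed.

Section Ultralimit.
Context {T : Type} (U : (T -> Prop) -> Prop) (HU : ultrafilter U).

Lemma uf_witness3 (P Q S : T -> Prop) : U P -> U Q -> U S -> exists t, P t /\ Q t /\ S t.
Proof. intros HP HQ HS. apply (uf_inhabited _ HU). now repeat apply (uf_and _ HU). Qed.

Definition ulim (g : T -> unitR) : R :=
  Rsup (fun r => 0 <= r <= 1 /\ U (fun t => r <= val (g t))).

Lemma ulim_is_lub (g : T -> unitR) :
  is_lub (fun r => 0 <= r <= 1 /\ U (fun t => r <= val (g t))) (ulim g).
Proof.
  apply Rsup_lub; [exists 0 | exists 1]; [split; [lra|] | intros r [Hr _]; lra].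
  apply (uf_mono _ HU (fun _ => True)); [intros t _; apply valP | apply (uf_true _ HU)].
Qed.

Lemma ulim_bounds (g : T -> unitR) : 0 <= ulim g <= 1.
Proof.
  split; apply (ulim_is_lub g); [split; [lra|] | intros r [Hr _]; lra].
  apply (uf_mono _ HU (fun _ => True)); [intros t _; apply valP | apply (uf_true _ HU)].
Qed.

Lemma ulim_near (g : T -> unitR) e : 0 < e ->
  U (fun t => ulim g - e <= val (g t) <= ulim g + e).
Proof.
  intros He. pose proof (ulim_bounds g). apply (uf_and _ HU).
  - assert (Hex : exists r, (0 <= r <= 1 /\ U (fun t => r <= val (g t))) /\ ulim g - e < r).
    { apply NNPP; intro Hn. assert (ulim g <= ulim g - e); [|lra].
      apply (ulim_is_lub g). intros r Hr. apply Rnot_lt_le. intro Hc. apply Hn. now exists r. }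
    destruct Hex as [r [[_ Hr] Hlt]]. apply (uf_mono _ HU _ _ (fun t Ht => Rlt_le _ _ (Rlt_le_trans _ _ _ Hlt Ht)) Hr).
  - destruct (uf_or_not _ HU (fun t => val (g t) <= ulim g + e)) as [Hle|Hgt]; [exact Hle|].
    exfalso. destruct (Rle_dec (ulim g + e) 1) as [Hle1|Hgt1].
    + assert (Hub : ulim g + e <= ulim g); [|lra].
      apply (ulim_is_lub g). split; [lra|].
      apply (uf_mono _ HU _ _ (fun t Ht => Rlt_le _ _ (Rnot_le_lt _ _ Ht)) Hgt).
    + destruct (uf_inhabited _ HU _ Hgt) as [t Ht]. apply Ht. pose proof (valP (g t)). lra.
Qed.

Definition ulim_unit (g : T -> unitR) : unitR := exist _ (ulim g) (ulim_bounds g).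

Lemma ulim_phom {A : Type} (oplus : A -> A -> A) (neg : A -> A) (c : unitQ -> A)
  (f : T -> A -> unitR) : (forall t, phom oplus neg c (f t)) ->
  phom oplus neg c (fun y => ulim_unit (fun t => f t y)).
Proof.
  intros Hf. split; [|split].
  - intros y y'. apply unitR_eq. simpl.
    pose proof (ulim_bounds (fun t => f t y)); pose proof (ulim_bounds (fun t => f t y')).
    apply Rle_antisym; apply Rle_plus_epsilon; intros e He;
    destruct (uf_witness3 _ _ _ (ulim_near (fun t => f t (oplus y y')) (e/4) ltac:(lra))
               (ulim_near (fun t => f t y) (e/4) ltac:(lra))
               (ulim_near (fun t => f t y') (e/4) ltac:(lra))) as [t [H1 [H2 H3]]];
    rewrite (phom_oplus _ _ _ _ (Hf t)) in H1; unit_bounds; case_minmax.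
  - intros y. apply unitR_eq. simpl.
    apply Rle_antisym; apply Rle_plus_epsilon; intros e He;
    destruct (uf_witness3 _ _ _ (ulim_near (fun t => f t (neg y)) (e/4) ltac:(lra))
               (ulim_near (fun t => f t y) (e/4) ltac:(lra)) (uf_true _ HU)) as [t [H1 [H2 _]]];
    rewrite (phom_neg _ _ _ _ (Hf t)) in H1; lra.
  - intros r. apply unitR_eq. simpl.
    apply Rle_antisym; apply Rle_plus_epsilon; intros e He;
    destruct (uf_witness3 _ _ _ (ulim_near (fun t => f t (c r)) (e/4) ltac:(lra))
               (uf_true _ HU) (uf_true _ HU)) as [t [H1 _]];
    rewrite (phom_const _ _ _ _ (Hf t)) in H1; lra.
Qed.

End Ultralimit.

Definition mv_join_list {A : Type} (oplus : A -> A -> A) (neg : A -> A) (c : unitQ -> A)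
  (l : list A) : A := fold_right (mv_join oplus neg) (c qzero) l.

Lemma phom_le_join_list {A : Type} (oplus : A -> A -> A) (neg : A -> A) (c : unitQ -> A)
  (f : A -> unitR) (l : list A) y :
  phom oplus neg c f -> In y l -> val (f y) <= val (f (mv_join_list oplus neg c l)).
Proof.
  intros Hf. induction l as [|y0 l IH]; intros Hy; [destruct Hy|].
  simpl. rewrite (phom_join _ _ _ _ Hf). destruct Hy as [<- | Hy].
  - apply Rmax_l.
  - eapply Rle_trans; [apply IH, Hy | apply Rmax_r].
Qed.

Section Monadic.
Context {A : Type} (oplus : A -> A -> A) (neg : A -> A) (c : unitQ -> A) (ex : A -> A)
  (HM : is_monadic_pavelka oplus neg c ex)
  (Hsep : forall a b, (forall f, phom oplus neg c f -> f a = f b) -> a = b).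

Notation phomA := (phom oplus neg c).
Notation leA := (mv_le oplus neg (c qzero)).

Lemma ex_mono x y : leA x y -> leA (ex x) (ex y).
Proof. apply HM. Qed.
Lemma ex_extensive x : leA x (ex x).
Proof. apply HM. Qed.
Lemma ex_idem x : ex (ex x) = ex x.
Proof. apply HM. Qed.
Lemma ex_neg_ex x : ex (neg (ex x)) = neg (ex x).
Proof. apply HM. Qed.
Lemma ex_const_prod x r : mv_prod oplus neg (c r) (ex x) = ex (mv_prod oplus neg (c r) x).
Proof. apply HM. Qed.

Lemma phom_ex_ge f x : phomA f -> val (f x) <= val (f (ex x)).
Proof. intros Hf. apply (phom_le _ _ _ _ Hf), ex_extensive. Qed.

Lemma le_of_phom_le a b : (forall f, phomA f -> val (f a) <= val (f b)) -> leA a b.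
Proof.
  intros H. apply Hsep. intros f Hf. apply unitR_eq.
  rewrite (phom_oplus _ _ _ _ Hf), (phom_neg _ _ _ _ Hf), (phom_one _ _ _ _ Hf).
  specialize (H f Hf). unit_bounds. case_minmax.
Qed.

Lemma ex_zero : ex (c qzero) = c qzero.
Proof.
  destruct HM as [[HMV _] _].
  assert (H0 : forall y, mv_prod oplus neg (c qzero) y = c qzero).
  { intros y. unfold mv_prod. rewrite (mv_1oplus _ _ _ HMV). apply (mv_negK _ _ _ HMV). }
  rewrite <- (H0 (c qzero)) at 1. rewrite <- ex_const_prod. apply H0.
Qed.

(* M := (ex p)^c /\ (ex q)^c is a meet of closed elements, hence closed; then so
   is its negation ex p \/ ex q, which lies above p \/ q. *)
Lemma ex_join_le p q : leA (ex (mv_join oplus neg p q)) (mv_join oplus neg (ex p) (ex q)).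
Proof.
  destruct HM as [[HMV _] _].
  set (M := mv_meet oplus neg (neg (ex p)) (neg (ex q))).
  assert (HMf : forall f, phomA f -> val (f M) = Rmin (val (f (neg (ex p)))) (val (f (neg (ex q))))).
  { intros f Hf. apply (phom_meet _ _ _ _ Hf). }
  assert (HMclosed : ex M = M).
  { apply (mv_le_antisym _ _ _ HMV); [|apply ex_extensive].
    apply le_of_phom_le. intros f Hf. rewrite (HMf f Hf). apply Rmin_glb.
    - rewrite <- ex_neg_ex. apply (phom_le _ _ _ _ Hf), ex_mono, le_of_phom_le.
      intros g Hg. rewrite (HMf g Hg). apply Rmin_l.
    - rewrite <- (ex_neg_ex q). apply (phom_le _ _ _ _ Hf), ex_mono, le_of_phom_le.
      intros g Hg. rewrite (HMf g Hg). apply Rmin_r. }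
  assert (HnMclosed : ex (neg M) = neg M) by (rewrite <- HMclosed at 1 2; apply ex_neg_ex).
  change (mv_join oplus neg (ex p) (ex q)) with (neg M). rewrite <- HnMclosed.
  apply ex_mono, le_of_phom_le. intros f Hf.
  change (neg M) with (mv_join oplus neg (ex p) (ex q)).
  rewrite !(phom_join _ _ _ _ Hf).
  pose proof (phom_ex_ge f p Hf). pose proof (phom_ex_ge f q Hf). case_minmax.
Qed.

Lemma phom_ex_join_list_lt f (l : list A) b : phomA f -> 0 < b ->
  (forall y, In y l -> val (f (ex y)) < b) -> val (f (ex (mv_join_list oplus neg c l))) < b.
Proof.
  intros Hf Hb. induction l as [|y l IH]; intros Hl; simpl.
  - rewrite ex_zero, (phom_const _ _ _ _ Hf), qval_zero. exact Hb.
  - eapply Rle_lt_trans; [apply (phom_le _ _ _ _ Hf), ex_join_le|].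
    rewrite (phom_join _ _ _ _ Hf). apply Rmax_lub_lt.
    + apply Hl. now left.
    + apply IH. intros y' Hy'. apply Hl. now right.
Qed.

Section Witness.
Context (phi : A -> unitR) (Hphi : phomA phi) (x : A).
Let t := val (phi (ex x)).
Hypothesis Ht : 0 < t.

(* Otherwise, for rationals s slightly above 1 - t and s_y slightly below
   s + t - phi(ex y), s.x lies below the join of the s_y.y, while
   phi(ex (s.x)) = s + t - 1 exceeds every phi(ex (s_y.y)). *)
Lemma phom_finite_witness (l : list A) eps : 0 < eps ->
  exists f, phomA f /\ forall y, In y l -> val (f y) - val (f x) <= val (phi (ex y)) - t + eps.
Proof.
  intros He. apply NNPP; intro Hno.
  assert (Hall : forall f, phomA f -> exists y,
            In y l /\ val (phi (ex y)) - t + eps < val (f y) - val (f x)).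
  { intros f Hf. apply NNPP; intro H2. apply Hno. exists f. split; auto.
    intros y Hy. apply Rnot_lt_le. intro H3. apply H2. now exists y. }
  assert (Ht1 : t <= 1) by (unfold t; unit_bounds; lra).
  destruct (unitQ_between (1 - t) (Rmin (1 - t + eps/2) 1)) as [s Hs]; [case_minmax ..|].
  assert (Hsy : forall y, exists sy : unitQ,
             qval s + t - val (phi (ex y)) - eps < qval sy < qval s + t - val (phi (ex y))).
  { intro y. pose proof (valP (phi (ex y))). apply unitQ_between; case_minmax. }
  destruct (choice _ Hsy) as [sy Hsy'].
  set (term := fun y => mv_prod oplus neg (c (sy y)) y).
  assert (Hbelow : leA (mv_prod oplus neg (c s) x) (mv_join_list oplus neg c (map term l))).
  { apply le_of_phom_le. intros f Hf. destruct (Hall f Hf) as [y [Hy Hyf]].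
    eapply Rle_trans; [|apply (phom_le_join_list _ _ _ f _ (term y) Hf), in_map, Hy].
    unfold term. rewrite !(phom_prod _ _ _ _ Hf), !(phom_const _ _ _ _ Hf).
    specialize (Hsy' y). unfold luk. unit_bounds. case_minmax. }
  apply ex_mono, (phom_le _ _ _ _ Hphi) in Hbelow.
  rewrite <- ex_const_prod, (phom_prod _ _ _ _ Hphi), (phom_const _ _ _ _ Hphi) in Hbelow.
  fold t in Hbelow.
  apply (Rle_not_lt _ _ Hbelow), (phom_ex_join_list_lt _ _ _ Hphi); [unfold luk; case_minmax|].
  intros y' Hy'. apply in_map_iff in Hy' as [y [<- _]].
  unfold term. rewrite <- ex_const_prod, (phom_prod _ _ _ _ Hphi), (phom_const _ _ _ _ Hphi).
  specialize (Hsy' y). unfold luk. fold t. unit_bounds. case_minmax.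
Qed.

End Witness.

Definition point : Type := {f : A -> unitR | phomA f}.

Definition pt (p : point) : A -> unitR := proj1_sig p.

Lemma pt_phom (p : point) : phomA (pt p).
Proof. exact (proj2_sig p). Qed.

(* An ultralimit of the finite witnesses of phom_finite_witness, taken along an
   ultrafilter containing the sets of points that witness finitely many y. *)
Lemma phom_ex_witness (phi : A -> unitR) (x : A) : phomA phi -> 0 < val (phi (ex x)) ->
  exists psi, phomA psi /\
    forall y, val (psi y) - val (phi (ex y)) <= val (psi x) - val (phi (ex x)).
Proof.
  intros Hphi Ht. set (t := val (phi (ex x))) in *.
  set (good := fun (p : point) (l : list A) eps => forall y, In y l ->
          val (pt p y) - val (pt p x) <= val (phi (ex y)) - t + eps).
  set (F := fun S : point -> Prop => exists l eps, 0 < eps /\ forall p, good p l eps -> S p).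
  destruct (ultrafilter_extension F) as [U [HU HFU]].
  - exists nil, 1. split; [lra|]. auto.
  - intros P Q [l1 [e1 [He1 H1]]] [l2 [e2 [He2 H2]]].
    exists (l1 ++ l2), (Rmin e1 e2). split; [now apply Rmin_pos|].
    intros p Hp. split; [apply H1 | apply H2]; intros y Hy;
      [specialize (Hp y (in_or_app _ _ _ (or_introl Hy))) |
       specialize (Hp y (in_or_app _ _ _ (or_intror Hy)))]; case_minmax.
  - intros P Q HPQ [l [e [He H]]]. exists l, e. auto.
  - intros P [l [e [He H]]].
    destruct (phom_finite_witness phi Hphi x Ht l e He) as [f [Hf Hl]].
    exists (exist _ f Hf). now apply H.
  - set (psi := fun y => ulim_unit U HU (fun p : point => pt p y)).
    exists psi. split; [apply (ulim_phom U HU), (fun p => pt_phom p)|].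
    intros y. apply Rle_plus_epsilon. intros e He.
    assert (Hgood : U (fun p => good p (y :: nil) (e/3))).
    { apply HFU. exists (y :: nil), (e/3). split; [lra | auto]. }
    destruct (uf_witness3 U HU _ _ _ Hgood (ulim_near U HU (fun p : point => pt p y) (e/3) ltac:(lra))
                (ulim_near U HU (fun p : point => pt p x) (e/3) ltac:(lra)))
      as [p [H1 [H2 H3]]].
    specialize (H1 y (or_introl eq_refl)). simpl. lra.
Qed.

(** * The fuzzy equivalence on homomorphisms *)

Definition hom_dist (p q : point) : R :=
  Rsup (fun r => exists y, r = Rmax 0 (val (pt q y) - val (pt p (ex y)))).

Lemma hom_dist_is_lub p q :
  is_lub (fun r => exists y, r = Rmax 0 (val (pt q y) - val (pt p (ex y))))
    (hom_dist p q).
Proof.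
  apply Rsup_lub; [eexists; exists (c qzero); reflexivity|].
  exists 1. intros r [y ->]. unit_bounds. case_minmax.
Qed.

Lemma hom_dist_ge p q y : Rmax 0 (val (pt q y) - val (pt p (ex y))) <= hom_dist p q.
Proof. apply hom_dist_is_lub. now exists y. Qed.

Lemma hom_dist_le p q b :
  (forall y, val (pt q y) - val (pt p (ex y)) <= b) -> 0 <= b -> hom_dist p q <= b.
Proof.
  intros H Hb. apply hom_dist_is_lub. intros r [y ->]. specialize (H y). case_minmax.
Qed.

Lemma hom_dist_bounds p q : 0 <= hom_dist p q <= 1.
Proof.
  split.
  - eapply Rle_trans; [apply Rmax_l | apply (hom_dist_ge p q (c qzero))].
  - apply hom_dist_le; [intros y; unit_bounds; lra | lra].
Qed.

Lemma hom_dist_self p : hom_dist p p = 0.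
Proof.
  apply Rle_antisym; [|apply hom_dist_bounds].
  apply hom_dist_le; [|lra]. intros y. apply Rle_minus, phom_ex_ge, (pt_phom p).
Qed.

(* Test hom_dist q p on the closed element neg (ex y). *)
Lemma hom_dist_le_sym p q : hom_dist p q <= hom_dist q p.
Proof.
  apply hom_dist_le; [|apply hom_dist_bounds]. intro y.
  eapply Rle_trans; [|apply (hom_dist_ge q p (neg (ex y)))].
  rewrite ex_neg_ex, (phom_neg _ _ _ _ (pt_phom p)), (phom_neg _ _ _ _ (pt_phom q)).
  pose proof (phom_ex_ge _ y (pt_phom q)). case_minmax.
Qed.

Lemma hom_dist_triangle p q w : hom_dist p w <= hom_dist p q + hom_dist q w.
Proof.
  apply hom_dist_le; [|pose proof (hom_dist_bounds p q); pose proof (hom_dist_bounds q w); lra].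
  intro y. pose proof (hom_dist_ge q w y) as H1. pose proof (hom_dist_ge p q (ex y)) as H2.
  rewrite ex_idem in H2. case_minmax.
Qed.

Lemma one_minus_hom_dist_bounds p q : 0 <= 1 - hom_dist p q <= 1.
Proof. pose proof (hom_dist_bounds p q). lra. Qed.

Definition hom_rel (p q : point) : unitR :=
  exist _ (1 - hom_dist p q) (one_minus_hom_dist_bounds p q).

Lemma hom_rel_fuzzy_equiv : fuzzy_equiv hom_rel.
Proof.
  split; [|split].
  - intro p. simpl. rewrite hom_dist_self. lra.
  - intros p q. apply unitR_eq. simpl. f_equal.
    apply Rle_antisym; apply hom_dist_le_sym.
  - intros p q w. rewrite val_u_prod. simpl.
    pose proof (hom_dist_triangle p q w).
    pose proof (one_minus_hom_dist_bounds p w).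
    pose proof (hom_dist_bounds p q); pose proof (hom_dist_bounds q w). unfold luk. case_minmax.
Qed.

(* For p(ex x) > 0 the witness q of phom_ex_witness has hom_dist p q <= q x - p(ex x),
   so R(p,q) . q(x) >= p(ex x). *)
Lemma gR_hom_rel_eval (x : A) (p : point) :
  val (gR hom_rel (fun q : point => pt q x) p) = val (pt p (ex x)).
Proof.
  pose proof (valP (pt p (ex x))).
  apply Rle_antisym.
  - apply gR_le. intro q. unfold hom_rel; cbn [proj1_sig].
    pose proof (hom_dist_ge p q x). unit_bounds. unfold luk. case_minmax.
  - destruct (Rle_dec (val (pt p (ex x))) 0) as [Ht0|Ht0].
    { pose proof (valP (gR hom_rel (fun q : point => pt q x) p)). lra. }
    destruct (phom_ex_witness (pt p) x (pt_phom p)) as [psi [Hpsi Hk]]; [lra|].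
    set (q := exist _ psi Hpsi : point).
    eapply Rle_trans; [|apply (gR_ge _ _ p q)]. unfold hom_rel; cbn [proj1_sig].
    change (pt q) with psi.
    assert (Hd : hom_dist p q <= val (psi x) - val (pt p (ex x))).
    { apply hom_dist_le; [apply Hk|].
      pose proof (Hk (mv_one neg (c qzero))) as H1.
      rewrite (phom_one _ _ _ _ Hpsi) in H1. unit_bounds. lra. }
    pose proof (valP (psi x)). unfold luk. case_minmax.
Qed.

End Monadic.

Theorem monadic_pavelka_representation {A : Type} (oplus : A -> A -> A) (neg : A -> A)
  (c : unitQ -> A) (ex : A -> A) :
  is_monadic_pavelka oplus neg c ex ->
  (forall a b, (forall f, phom oplus neg c f -> f a = f b) -> a = b) ->
  exists (I : Type) (Rel : I -> I -> unitR) (e : A -> (I -> unitR)),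
    fuzzy_equiv Rel /\
    pavelka_hom oplus neg c (@pw_oplus I) (@pw_neg I) (@pw_const I) e /\
    (forall x y, e x = e y -> x = y) /\
    (forall x, e (ex x) = gR Rel (e x)).
Proof.
  intros HM Hsep.
  exists (point oplus neg c), (hom_rel oplus neg c ex), (fun x p => pt oplus neg c p x).
  split; [apply hom_rel_fuzzy_equiv, HM|]. split; [split; [|split]|split].
  - intros x y. apply functional_extensionality. intro p. apply (pt_phom oplus neg c p).
  - intros x. apply functional_extensionality. intro p. apply (pt_phom oplus neg c p).
  - intros r. apply functional_extensionality. intro p. apply (pt_phom oplus neg c p).
  - intros x y Hxy. apply Hsep. intros f Hf.
    exact (f_equal (fun g => g (exist _ f Hf)) Hxy).
  - intro x. apply functional_extensionality. intro p. apply unitR_eq.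
    symmetry. apply gR_hom_rel_eval; auto.
Qed.

Theorem theorem15 :
  (* (i) *)
  (forall (I : Type) (Rel : I -> I -> unitR),
     fuzzy_equiv Rel ->
     is_monadic_pavelka (@pw_oplus I) (@pw_neg I) (@pw_const I) (gR Rel)) /\
  (* (ii) *)
  (forall (A : Type) (oplus : A -> A -> A) (neg : A -> A) (c : unitQ -> A) (ex : A -> A),
     is_monadic_pavelka oplus neg c ex ->
     mv_semisimple oplus neg (c qzero) ->
     exists (I : Type) (Rel : I -> I -> unitR) (e : A -> (I -> unitR)),
       fuzzy_equiv Rel /\
       pavelka_hom oplus neg c (@pw_oplus I) (@pw_neg I) (@pw_const I) e /\
       (forall x y, e x = e y -> x = y) /\
       (forall x, e (ex x) = gR Rel (e x))).
Proof.
  split.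
  - exact gR_monadic_pavelka.
  - intros A oplus neg c ex HM HS.
    apply monadic_pavelka_representation; [exact HM|].
    apply semisimple_phoms_separate; [apply HM | exact HS].
Qed.
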